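(* Let $0\le\alpha<\pi/2$ and let $H\in\mathbb{M}_n(\mathbb{M}_k)$ satisfy $W(H)\subseteq S_\alpha$. Then \[ \left(\frac{\mathrm{tr}\,|\mathrm{det}_1 H|}{k}\right)^k\ge (\cos\alpha)^{nk}|\det H| \quad\text{and}\quad \left(\frac{\mathrm{tr}\,|\mathrm{det}_2 H|}{n}\right)^n\ge (\cos\alpha)^{nk}|\det H|. \]
   Context: $\mathbb{M}_n(\mathbb{M}_k)$ denotes the set of $nk\times nk$ complex matrices partitioned as $H=[H_{i,j}]_{i,j=1}^n$ with each block $H_{i,j}=[h^{i,j}_{l,m}]_{l,m=1}^k$ a $k\times k$ complex matrix. For $1\le l,m\le k$ let $G_{l,m}=[h^{i,j}_{l,m}]_{i,j=1}^n\in\mathbb{M}_n$. The partial determinants are $\mathrm{det}_1 H=[\det G_{l,m}]_{l,m=1}^k\in\mathbb{M}_k$ and $\mathrm{det}_2 H=[\det H_{i,j}]_{i,j=1}^n\in\mathbb{M}_n$. Here, for a matrix $A$, $|A|$ denotes the matrix whose entries are the absolute values of the entries of $A$ (so $\mathrm{tr}|\mathrm{det}_2H|=\sum_i|\det H_{i,i}|$). The numerical range of $A\in\mathbb{M}_p$ is $W(A)=\{x^*Ax: x\in\mathbb{C}^p, x^*x=1\}$, and for $\alpha\in[0,\pi/2)$, $S_\alpha=\{z\in\mathbb{C}: \Re z>0,\ |\Im z|\le (\Re z)\tan\alpha\}$. *)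

From HB Require Import structures.
From mathcomp Require Import all_boot all_order all_algebra.
Set Implicit Arguments. Unset Strict Implicit. Unset Printing Implicit Defensive.
Import Order.TTheory GRing.Theory Num.Theory.
Local Open Scope ring_scope.

Section Defs.
Variable C : numClosedFieldType.

(* H in M_n(M_k) is stored as an (n*k)x(n*k) matrix; entry h^{i,j}_{l,m}
   sits at row i*k+l and column j*k+m (mxvec_index i l = i*k + l). *)
Definition bentry n k (H : 'M[C]_(n * k)) (i j : 'I_n) (l m : 'I_k) : C :=
  H (mxvec_index i l) (mxvec_index j m).

Definition blockH n k (H : 'M[C]_(n * k)) (i j : 'I_n) : 'M[C]_k :=
  \matrix_(l, m) bentry H i j l m.

Definition Gmat n k (H : 'M[C]_(n * k)) (l m : 'I_k) : 'M[C]_n :=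
  \matrix_(i, j) bentry H i j l m.

Definition partial_det1 n k (H : 'M[C]_(n * k)) : 'M[C]_k :=
  \matrix_(l, m) \det (Gmat H l m).
Definition partial_det2 n k (H : 'M[C]_(n * k)) : 'M[C]_n :=
  \matrix_(i, j) \det (blockH H i j).

Definition absmx p (A : 'M[C]_p) : 'M[C]_p := \matrix_(i, j) `|A i j|.

Definition adjmx p q (A : 'M[C]_(p, q)) : 'M[C]_(q, p) := (map_mx Num.conj A)^T.

Definition numrange p (A : 'M[C]_p) (z : C) : Prop :=
  exists x : 'cV[C]_p, (adjmx x *m x) 0 0 = 1 /\ z = (adjmx x *m A *m x) 0 0.

(* Sector S_alpha, with alpha in [0, pi/2) encoded by ca = cos alpha and
   sa = sin alpha (ca > 0, sa >= 0, ca^2 + sa^2 = 1):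
   Re z > 0 and |Im z| <= Re z * tan alpha  (i.e. |Im z| * ca <= Re z * sa). *)
Definition sector (ca sa : C) (z : C) : Prop :=
  0 < 'Re z /\ `|'Im z| * ca <= 'Re z * sa.

End Defs.

(* Write R := (H + H^* )/2.  The hypothesis on W(H) says that every eigenvalue z of the
   pencil (H, R) satisfies cos(alpha) |z| <= 1 <= |z|, whence
   cos(alpha)^(nk) |det H| <= det R <= |det H|.  The same holds for the pinching of H
   that keeps only the diagonal blocks (H_{i,i} or G_{l,l}), which is again sectorial
   and whose Hermitian part is the pinching of R.  Fischer's inequality compares
   det R with the determinant of its pinching, and the AM-GM inequality turns the
   product of the diagonal block determinants into the power of their mean. *)
Set Warnings "-notation-overridden,-ambiguous-paths".
From HB Require Import structures.
From mathcomp Require Import all_boot all_order all_algebra ring.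
From mathcomp Require Import fingroup perm.
Set Implicit Arguments. Unset Strict Implicit. Unset Printing Implicit Defensive.
Import Order.TTheory GRing.Theory Num.Theory.
Local Open Scope ring_scope.

Section Pinching.
Variable C : numClosedFieldType.

Definition qform p (A : 'M[C]_p) (v : 'rV[C]_p) : C := (v *m A *m adjmx v) 0 0.

Definition mxRe p (A : 'M[C]_p) : 'M[C]_p := 2%:R^-1 *: (A + adjmx A).

Definition posdef p (A : 'M[C]_p) := forall v, v != 0 -> 0 < qform A v.

Definition pinchmx p m (lab : 'I_p -> 'I_m) (A : 'M[C]_p) : 'M[C]_p :=
  \matrix_(r, c) if lab r == lab c then A r c else 0.

Definition block_part p m (lab : 'I_p -> 'I_m) (v : 'rV[C]_p) (i : 'I_m) : 'rV[C]_p :=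
  \row_r (if lab r == i then v 0 r else 0).

Lemma adjmxK p q (M : 'M[C]_(p, q)) : adjmx (adjmx M) = M.
Proof. by apply/matrixP => i j; rewrite /adjmx !mxE conjCK. Qed.

Lemma qformE p (A : 'M[C]_p) v :
  qform A v = \sum_r \sum_c v 0 r * A r c * (v 0 c)^*.
Proof.
rewrite /qform /adjmx mxE exchange_big; apply: eq_bigr => c _.
by rewrite !mxE mulr_suml.
Qed.

Lemma qformD p (A B : 'M[C]_p) v : qform (A + B) v = qform A v + qform B v.
Proof. by rewrite /qform mulmxDr mulmxDl mxE. Qed.

Lemma qformZ p (a : C) (A : 'M[C]_p) v : qform (a *: A) v = a * qform A v.
Proof. by rewrite /qform -scalemxAr -scalemxAl mxE. Qed.

Lemma qform_adj p (A : 'M[C]_p) v : qform (adjmx A) v = (qform A v)^*.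
Proof.
rewrite !qformE rmorph_sum exchange_big /=; apply: eq_bigr => r _.
rewrite rmorph_sum; apply: eq_bigr => c _.
by rewrite /adjmx !mxE !rmorphM /= conjCK; ring.
Qed.

Lemma qform_mxRe p (A : 'M[C]_p) v : qform (mxRe A) v = 'Re (qform A v).
Proof. by rewrite /mxRe qformZ qformD qform_adj ReE mulrC. Qed.

Lemma qform_scalev p (A : 'M[C]_p) (a : C) v :
  qform A (a *: v) = a * a^* * qform A v.
Proof.
rewrite !qformE mulr_sumr; apply: eq_bigr => r _; rewrite mulr_sumr.
by apply: eq_bigr => c _; rewrite !mxE rmorphM /=; ring.
Qed.

Lemma qform_pencil p (A B : 'M[C]_p) (z : C) v :
  v *m A = z *: (v *m B) -> qform A v = z * qform B v.
Proof. by move=> h; rewrite /qform h -scalemxAl mxE. Qed.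

Lemma row_neq0P p (v : 'rV[C]_p) : v != 0 -> exists r, v 0 r != 0.
Proof.
move=> vn0; apply/existsP; apply: contraR vn0 => /existsPn h.
by apply/eqP/rowP => r; rewrite mxE; apply/eqP/negbNE/h.
Qed.

Lemma posdef1 p : posdef (1%:M : 'M[C]_p).
Proof.
move=> v /row_neq0P[r0 hr0]; rewrite qformE.
have diag r : \sum_c v 0 r * (1%:M : 'M[C]_p) r c * (v 0 c)^* = v 0 r * (v 0 r)^*.
  rewrite (bigD1 r) //= big1 ?addr0; first by rewrite mxE eqxx mulr1.
  by move=> c /negbTE h; rewrite mxE eq_sym h mulr0 mul0r.
rewrite (bigD1 r0) //= diag ltr_pwDl ?mul_conjC_gt0 //.
by apply: sumr_ge0 => r _; rewrite diag mul_conjC_ge0.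
Qed.

Lemma eigen_seq p (A : 'M[C]_p) :
  exists r : seq C, [/\ size r = p, \det A = \prod_(z <- r) z,
     \tr A = \sum_(z <- r) z &
     forall z, z \in r -> exists2 v : 'rV_p, v *m A = z *: v & v != 0].
Proof.
have [r] := closed_field_poly_normal (char_poly A).
rewrite (monicP (char_poly_monic A)) scale1r => hr.
have szr : size r = p by have := size_char_poly A; rewrite hr size_prod_XsubC; case.
exists r; split => //.
- have := char_poly_det A; rewrite hr coef0_prod_XsubC szr.
  by move/(congr1 (fun x => (-1) ^+ p * x)); rewrite !signrMK.
- case: p A r hr szr => [|p] A r hr szr.
    by rewrite (size0nil szr) big_nil /mxtrace big_ord0.
  have := char_poly_trace A isT; rewrite hr => ct.
  have := coefPn_prod_XsubC (ps := r); rewrite szr => /(_ isT) h.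
  by apply: oppr_inj; rewrite -ct h.
- move=> z zr; apply/eigenvalueP; rewrite eigenvalue_root_char hr.
  by rewrite root_prod_XsubC.
Qed.

Lemma eigen_pencil p (A B : 'M[C]_p) : B \in unitmx ->
  exists r : seq C, [/\ size r = p, \det A = \det B * \prod_(z <- r) z,
     \tr (A *m invmx B) = \sum_(z <- r) z &
     forall z, z \in r -> exists2 v : 'rV_p, v *m A = z *: (v *m B) & v != 0].
Proof.
move=> Bu; have [r [szr dr tr hr]] := eigen_seq (A *m invmx B).
exists r; split => //.
  by rewrite -dr det_mulmx det_inv mulrCA divff ?mulr1 // -unitfE -unitmxE.
move=> z /hr[v hv vn0]; exists v => //.
by rewrite scalemxAl -hv -mulmxA mulmxKV.
Qed.

Lemma det_posdef_gt0 p (A : 'M[C]_p) : posdef A -> 0 < \det A.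
Proof.
move=> pdA; have [r [_ -> _ hr]] := eigen_pencil A (unitmx1 C p).
rewrite det1 mul1r big_seq_cond; apply: prodr_gt0 => z /andP[/hr[v hv vn0] _].
have := pdA v vn0; rewrite (qform_pencil hv) pmulr_lgt0 //; exact: posdef1.
Qed.

Lemma mxRe_pinch p m (lab : 'I_p -> 'I_m) (A : 'M[C]_p) :
  mxRe (pinchmx lab A) = pinchmx lab (mxRe A).
Proof.
apply/matrixP => r c; rewrite /mxRe /adjmx !mxE eq_sym.
by case: ifP => _; rewrite ?conjC0 ?addr0 ?mulr0.
Qed.

Lemma qform_pinch p m (lab : 'I_p -> 'I_m) (A : 'M[C]_p) v :
  qform (pinchmx lab A) v = \sum_i qform A (block_part lab v i).
Proof.
rewrite qformE [RHS](eq_bigr _ (fun i _ => qformE _ _)).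
rewrite [RHS]exchange_big /=; apply: eq_bigr => r _.
rewrite [RHS]exchange_big /=; apply: eq_bigr => c _.
rewrite (bigD1 (lab r)) //= big1 ?addr0; last first.
  by move=> i /negbTE h; rewrite !mxE eq_sym h !mul0r.
rewrite !mxE eqxx; have [//|ne] := eqVneq (lab r) (lab c).
by rewrite !(mulr0, mul0r, rmorph0).
Qed.

Lemma block_part_neq0 p m (lab : 'I_p -> 'I_m) (v : 'rV[C]_p) :
  v != 0 -> exists i, block_part lab v i != 0.
Proof.
move=> /row_neq0P[r hr]; exists (lab r).
by apply: contraNneq hr => /rowP /(_ r); rewrite !mxE eqxx => ->.
Qed.

(* The pinching commutes with the diagonal projection onto each block, so does its inverse. *)
Lemma invmx_pinch_eq0 p m (lab : 'I_p -> 'I_m) (A : 'M[C]_p) r c :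
  pinchmx lab A \in unitmx -> lab r != lab c -> invmx (pinchmx lab A) r c = 0.
Proof.
set D := pinchmx lab A; set Y := invmx D => Du ne.
set P := diag_mx (\row_t ((lab t == lab c)%:R : C)).
have PD : P *m D = D *m P.
  apply/matrixP => a b; rewrite mul_diag_mx mul_mx_diag !mxE.
  have [->|] := eqVneq (lab a) (lab b); last by rewrite mulr0 mul0r.
  by rewrite mulrC.
have YP : Y *m P = P *m Y.
  rewrite -[Y *m P]mulmx1 -(mulmxV Du) -/Y !mulmxA -[Y *m P *m D]mulmxA PD.
  by rewrite mulmxA (mulVmx Du) mul1mx.
move/matrixP: YP => /(_ r c); rewrite mul_diag_mx mul_mx_diag !mxE eqxx mulr1.
by rewrite (negbTE ne) mul0r.
Qed.

Lemma mxtrace_mul_invmx_pinch p m (lab : 'I_p -> 'I_m) (A : 'M[C]_p) :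
  pinchmx lab A \in unitmx -> \tr (A *m invmx (pinchmx lab A)) = p%:R.
Proof.
move=> Du; rewrite mxtrace_mulC -[RHS](mxtrace1 C p) -(mulVmx Du).
rewrite /mxtrace; apply: eq_bigr => a _; rewrite !mxE.
apply: eq_bigr => b _; rewrite mxE eq_sym.
by have [//|nab] := eqVneq (lab a) (lab b); rewrite invmx_pinch_eq0 // !mul0r.
Qed.

Lemma mxtrace_absmx p (A : 'M[C]_p) : \tr (absmx A) = \sum_i `|A i i|.
Proof. by apply: eq_bigr => i _; rewrite mxE. Qed.

Lemma AGM_ord m (F : 'I_m -> C) : (forall i, 0 <= F i) ->
  \prod_i F i <= ((\sum_i F i) / m%:R) ^+ m.
Proof.
move=> F0; have := @leif_AGM C 'I_m predT F.
by rewrite cardT size_enum_ord => /(_ (fun i _ => F0 i)) [].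
Qed.

Lemma AGM_seq (r : seq C) : (forall z, z \in r -> 0 <= z) ->
  \prod_(z <- r) z <= ((\sum_(z <- r) z) / (size r)%:R) ^+ size r.
Proof.
move=> r0; rewrite (big_nth 0) [in X in _ <= X](big_nth 0) !big_mkord.
by apply: AGM_ord => i; rewrite r0 // mem_nth.
Qed.

(* Fischer's inequality; the eigenvalues of the pencil (A, pinching of A) are positive
   with mean 1, so their product is at most 1 by AM-GM. *)
Lemma det_le_det_pinch p m (lab : 'I_p -> 'I_m) (A : 'M[C]_p) :
  posdef A -> posdef (pinchmx lab A) -> \det A <= \det (pinchmx lab A).
Proof.
case: p lab A => [|p] lab A pdA pdD; first by rewrite !det_mx00.
set D := pinchmx lab A; have dD := det_posdef_gt0 pdD.
have Du : D \in unitmx by rewrite unitmxE unitfE gt_eqF.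
have [r [szr dr tr hr]] := eigen_pencil A Du.
have r_ge0 z : z \in r -> 0 <= z.
  move=> /hr[v hv vn0]; have := pdA v vn0.
  by rewrite (qform_pencil hv) pmulr_lgt0 ?pdD // => /ltW.
have := AGM_seq r_ge0.
rewrite -tr mxtrace_mul_invmx_pinch // szr divff ?pnatr_eq0 // expr1n.
by rewrite -(ler_pM2l dD) mulr1 -dr.
Qed.

Lemma prod_scale_seq (c : C) (F : C -> C) (r : seq C) :
  \prod_(z <- r) (c * F z) = c ^+ size r * \prod_(z <- r) F z.
Proof.
elim: r => [|a r ih]; first by rewrite !big_nil mulr1.
by rewrite !big_cons ih /= exprS; ring.
Qed.

Section Sector.
Variables ca sa : C.
Hypotheses (ca_pos : 0 < ca) (sa_nneg : 0 <= sa) (pyth : ca ^+ 2 + sa ^+ 2 = 1).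
Let ca_ge0 : 0 <= ca := ltW ca_pos.

Definition sectorial p (A : 'M[C]_p) :=
  forall v : 'rV[C]_p, v != 0 -> sector ca sa (qform A v).

Definition csector (z : C) := 0 <= 'Re z /\ `|'Im z| * ca <= 'Re z * sa.

Lemma sector_scale (c z : C) : 0 < c -> sector ca sa (c * z) -> sector ca sa z.
Proof.
move=> c0 [h1 h2]; have cr : c \is Num.real by rewrite gtr0_real.
move: h1 h2; rewrite ReMl // ImMl // normrM gtr0_norm // pmulr_rgt0 // => h1 h2.
by split => //; rewrite -(ler_pM2l c0) !mulrA.
Qed.

Lemma sectorial_of_numrange p (A : 'M[C]_p) :
  (forall z, numrange A z -> sector ca sa z) -> sectorial A.
Proof.
move=> hW v vn0; set s := qform 1%:M v.
have s0 : 0 < s by exact: posdef1.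
set t := sqrtC s; have t0 : 0 < t by rewrite sqrtC_gt0.
have tc : t^-1^* = t^-1 by rewrite fmorphV /= (CrealP (gtr0_real t0)).
have tt : t^-1 * t^-1^* = s^-1.
  by rewrite tc -invrM ?unitfE ?gt_eqF // -expr2 sqrtCK.
apply: (@sector_scale s^-1); first by rewrite invr_gt0.
apply: hW; exists (adjmx (t^-1 *: v)); rewrite adjmxK; split.
  have -> w : (w *m adjmx w) 0 0 = qform 1%:M w by rewrite /qform mulmx1.
  by rewrite qform_scalev tt mulVf // gt_eqF.
by rewrite -[RHS]/(qform A (t^-1 *: v)) qform_scalev tt.
Qed.

Lemma sector_norm_bounds (z : C) :
  sector ca sa z -> ca * `|z| <= 'Re z /\ 'Re z <= `|z|.
Proof.
move=> [x0 hxy]; split; last by rewrite leif_Re_Creal.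
have yr : 'Im z \is Num.real by exact: Creal_Im.
have x0' := ltW x0.
have n1 : ca * `|z| \in Num.nneg by rewrite nnegrE mulr_ge0.
have n2 : 'Re z \in Num.nneg by rewrite nnegrE.
have n3 : `|'Im z| * ca \in Num.nneg by rewrite nnegrE mulr_ge0.
have n4 : 'Re z * sa \in Num.nneg by rewrite nnegrE mulr_ge0.
rewrite -(ler_sqr n1 n2) exprMn normC2_Re_Im.
move: hxy; rewrite -(ler_sqr n3 n4) !exprMn real_normK // => h.
by rewrite -[X in _ <= X]mul1r -pyth mulrDr mulrDl lerD2l mulrC [X in _ <= X]mulrC.
Qed.

Lemma csector_sum (I : finType) (F : I -> C) :
  (forall i, csector (F i)) -> csector (\sum_i F i).
Proof.
move=> h; split; rewrite !raddf_sum /=.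
  by apply: sumr_ge0 => i _; case: (h i).
apply: le_trans (_ : (\sum_i `|'Im (F i)|) * ca <= _).
  by rewrite ler_wpM2r // ler_norm_sum.
by rewrite !mulr_suml; apply: ler_sum => i _; case: (h i).
Qed.

Lemma sectorial_pinch p m (lab : 'I_p -> 'I_m) (A : 'M[C]_p) :
  sectorial A -> sectorial (pinchmx lab A).
Proof.
move=> hA v vn0; rewrite qform_pinch.
have hc i : csector (qform A (block_part lab v i)).
  have [->|wn0] := eqVneq (block_part lab v i) 0.
    by rewrite /csector /qform !mul0mx mxE !raddf0 normr0 !mul0r.
  by case: (hA _ wn0) => h1 h2; split => //; exact: ltW.
have [h1 h2] := csector_sum hc; split => //.
have [i wn0] := block_part_neq0 lab vn0.
rewrite raddf_sum (bigD1 i) //= ltr_pwDl //; first by case: (hA _ wn0).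
by apply: sumr_ge0 => j _; case: (hc j).
Qed.

Lemma posdef_mxRe p (A : 'M[C]_p) : sectorial A -> posdef (mxRe A).
Proof. by move=> hA v vn0; rewrite qform_mxRe; case: (hA v vn0). Qed.

(* From qform A v = z * Re (qform A v) and ca |q| <= Re q <= |q|. *)
Lemma sectorial_pencil_bounds p (A : 'M[C]_p) z (v : 'rV[C]_p) :
  sectorial A -> v != 0 -> v *m A = z *: (v *m mxRe A) ->
  ca * `|z| <= 1 /\ 1 <= `|z|.
Proof.
move=> hA vn0 hv; have := qform_pencil hv; rewrite qform_mxRe => hq.
have [x0 _] := hA v vn0.
have [b1 b2] := sector_norm_bounds (hA v vn0).
have nq : `|qform A v| = `|z| * 'Re (qform A v).
  by rewrite {1}hq normrM (gtr0_norm x0).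
rewrite nq in b1 b2; split; rewrite -(ler_pM2r x0) mul1r //.
by rewrite -mulrA.
Qed.

Lemma det_mxRe_bounds p (A : 'M[C]_p) : sectorial A ->
  ca ^+ p * `|\det A| <= \det (mxRe A) /\ \det (mxRe A) <= `|\det A|.
Proof.
move=> hA; have dR := det_posdef_gt0 (posdef_mxRe hA); have dR0 := ltW dR.
have Ru : mxRe A \in unitmx by rewrite unitmxE unitfE gt_eqF.
have [r [szr dr _ hr]] := eigen_pencil A Ru.
have hz z : z \in r -> ca * `|z| <= 1 /\ 1 <= `|z|.
  by move=> /hr[v hv vn0]; exact: sectorial_pencil_bounds hv.
rewrite dr normrM gtr0_norm // normr_prod; split.
  rewrite mulrCA -[X in ca ^+ X]szr -prod_scale_seq ler_piMr // big_seq_cond.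
  by apply: prodr_ile1 => z /andP[/hz[h1 _] _]; rewrite h1 mulr_ge0.
rewrite ler_peMr // big_seq_cond.
apply: le_trans (_ : \prod_(z <- r | (z \in r) && true) (1 : C) <= _).
  by rewrite big1.
by apply: ler_prod => z /andP[/hz[_ h2] _]; rewrite ler01.
Qed.

Lemma det_pinch_ge p m (lab : 'I_p -> 'I_m) (A : 'M[C]_p) :
  sectorial A -> ca ^+ p * `|\det A| <= `|\det (pinchmx lab A)|.
Proof.
move=> hA; have hD := sectorial_pinch lab hA.
have [lb _] := det_mxRe_bounds hA.
have [_ ub] := det_mxRe_bounds hD.
have Fischer : \det (mxRe A) <= \det (mxRe (pinchmx lab A)).
  rewrite mxRe_pinch; apply: det_le_det_pinch; first exact: posdef_mxRe.
  by rewrite -mxRe_pinch; exact: posdef_mxRe.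
exact: le_trans lb (le_trans Fischer ub).
Qed.

Lemma mean_abs_det_blocks_ge p m q (lab : 'I_p -> 'I_m) (A : 'M[C]_p)
    (B : 'I_m -> 'M[C]_q) :
  sectorial A -> \det (pinchmx lab A) = \prod_i \det (B i) ->
  ca ^+ p * `|\det A| <= ((\sum_i `|\det (B i)|) / m%:R) ^+ m.
Proof.
move=> hA dB; apply: le_trans (det_pinch_ge lab hA) _.
by rewrite dB normr_prod AGM_ord.
Qed.

End Sector.
End Pinching.

Lemma det_reindex (C : numClosedFieldType) p q (e : p = q) (f : 'I_p -> 'I_q)
  (finj : injective f) (A : 'M[C]_q) :
  \det (\matrix_(r, c) A (f r) (f c)) = \det A.
Proof.
subst q; set s := perm finj.
have -> : \matrix_(r, c) A (f r) (f c) = row_perm s (col_perm s A).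
  by apply/matrixP => r c; rewrite !mxE !permE.
rewrite row_permE col_permE !det_mulmx !det_perm odd_permV.
by rewrite mulrCA -signr_addb addbb mulr1.
Qed.

Definition mxvec_unindex m k (r : 'I_(m * k)) : 'I_m * 'I_k :=
  enum_val (cast_ord (esym (mxvec_cast m k)) r).

Lemma mxvec_unindexK m k (i : 'I_m) (l : 'I_k) :
  mxvec_unindex (mxvec_index i l) = (i, l).
Proof. by rewrite /mxvec_unindex /mxvec_index cast_ordK enum_rankK. Qed.

Lemma mxvec_indexK m k (r : 'I_(m * k)) :
  mxvec_index (mxvec_unindex r).1 (mxvec_unindex r).2 = r.
Proof. by case/mxvec_indexP: r => i l; rewrite mxvec_unindexK. Qed.

Lemma mxvec_unindex1 m k (i : 'I_m) (l : 'I_k) : (mxvec_unindex (mxvec_index i l)).1 = i.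
Proof. by rewrite mxvec_unindexK. Qed.

Lemma mxvec_unindex2 m k (i : 'I_m) (l : 'I_k) : (mxvec_unindex (mxvec_index i l)).2 = l.
Proof. by rewrite mxvec_unindexK. Qed.

(* Splits off the block of index 0: 'I_(m.+1 * k) is identified with 'I_(k + m * k). *)
Definition mxvec_liftS m k (t : 'I_(k + m * k)) : 'I_(m.+1 * k) :=
  match split t with
  | inl l => mxvec_index ord0 l
  | inr r => mxvec_index (lift ord0 (mxvec_unindex r).1) (mxvec_unindex r).2
  end.

Definition mxvec_unliftS m k (r : 'I_(m.+1 * k)) : 'I_(k + m * k) :=
  match unlift ord0 (mxvec_unindex r).1 with
  | None => lshift (m * k) (mxvec_unindex r).2
  | Some i => rshift k (mxvec_index i (mxvec_unindex r).2)
  end.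

Lemma mxvec_liftSK m k : cancel (@mxvec_liftS m k) (@mxvec_unliftS m k).
Proof.
move=> t; rewrite -[t]splitK; case: (split t) => [l|r];
  rewrite /mxvec_liftS unsplitK /mxvec_unliftS mxvec_unindexK /=.
  by rewrite unlift_none.
by rewrite liftK mxvec_indexK.
Qed.

Lemma mxvec_liftS_lshift m k (l : 'I_k) :
  mxvec_liftS (lshift (m * k) l) = mxvec_index ord0 l.
Proof. by rewrite /mxvec_liftS (unsplitK (inl _)). Qed.

Lemma mxvec_liftS_rshift m k (i : 'I_m) (l : 'I_k) :
  mxvec_liftS (rshift k (mxvec_index i l)) = mxvec_index (lift ord0 i) l.
Proof. by rewrite /mxvec_liftS (unsplitK (inr _)) mxvec_unindexK. Qed.

Lemma det_mxvec_blockdiag (C : numClosedFieldType) m k (D : 'M[C]_(m * k)) :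
  (forall i j l l', i != j -> D (mxvec_index i l) (mxvec_index j l') = 0) ->
  \det D = \prod_(i < m) \det (\matrix_(l, l') D (mxvec_index i l) (mxvec_index i l')).
Proof.
elim: m D => [|m IH] D hD; first by rewrite big_ord0 det_mx00.
set D' := \matrix_(t, u) D (mxvec_liftS t) (mxvec_liftS u) : 'M[C]_(k + m * k).
have <- : \det D' = \det D.
  by rewrite /D' (det_reindex _ (can_inj (@mxvec_liftSK m k))) // mulSn.
rewrite -[D']submxK.
have -> : dlsubmx D' = 0.
  apply/matrixP => r l; case/mxvec_indexP: r => i l'.
  by rewrite !mxE mxvec_liftS_rshift mxvec_liftS_lshift hD // eq_sym neq_lift.
rewrite det_ublock big_ord_recl; congr (_ * _).
  by congr (\det _); apply/matrixP => l l'; rewrite !mxE !mxvec_liftS_lshift.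
rewrite IH => [|i j l l' ne]; last by rewrite !mxE !mxvec_liftS_rshift hD.
apply: eq_bigr => i _; congr (\det _); apply/matrixP => l l'.
by rewrite !mxE !mxvec_liftS_rshift.
Qed.

Definition mxvec_swap n k (t : 'I_(k * n)) : 'I_(n * k) :=
  mxvec_index (mxvec_unindex t).2 (mxvec_unindex t).1.

Lemma mxvec_swapK n k : cancel (@mxvec_swap n k) (@mxvec_swap k n).
Proof. by move=> t; rewrite /mxvec_swap mxvec_unindex1 mxvec_unindex2 mxvec_indexK. Qed.

Section PartialDeterminants.
Variables (C : numClosedFieldType) (n k : nat) (H : 'M[C]_(n * k)).

Lemma det_pinch_blockH :
  \det (pinchmx (fun r => (mxvec_unindex r).1) H) = \prod_i \det (blockH H i i).
Proof.
rewrite det_mxvec_blockdiag => [|i j l l' ne]; last first.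
  by rewrite !mxE !(mxvec_unindex1, mxvec_unindex2) (negbTE ne).
apply: eq_bigr => i _; congr (\det _); apply/matrixP => l l'.
by rewrite /blockH !mxE !(mxvec_unindex1, mxvec_unindex2) eqxx.
Qed.

Lemma det_pinch_Gmat :
  \det (pinchmx (fun r => (mxvec_unindex r).2) H) = \prod_l \det (Gmat H l l).
Proof.
rewrite -(det_reindex (mulnC k n) (can_inj (@mxvec_swapK n k))).
rewrite det_mxvec_blockdiag => [|l l' i j ne]; last first.
  by rewrite /mxvec_swap !mxE !(mxvec_unindex1, mxvec_unindex2) (negbTE ne).
apply: eq_bigr => l _; congr (\det _); apply/matrixP => i j.
by rewrite /Gmat /mxvec_swap !mxE !(mxvec_unindex1, mxvec_unindex2) eqxx.
Qed.

End PartialDeterminants.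

Theorem theorem3p7 (C : numClosedFieldType) (ca sa : C)
  (ca_real : ca \is Num.real) (sa_real : sa \is Num.real)
  (ca_pos : 0 < ca) (sa_nneg : 0 <= sa) (pyth : ca ^+ 2 + sa ^+ 2 = 1)
  (n k : nat) (H : 'M[C]_(n * k))
  (hW : forall z, numrange H z -> sector ca sa z) :
  ((\tr (absmx (partial_det1 H)) / k%:R) ^+ k >= ca ^+ (n * k) * `|\det H|)
  /\ ((\tr (absmx (partial_det2 H)) / n%:R) ^+ n >= ca ^+ (n * k) * `|\det H|).
Proof.
have hH := sectorial_of_numrange hW.
have mean_ge := mean_abs_det_blocks_ge ca_pos sa_nneg pyth hH.
split; rewrite mxtrace_absmx; under eq_bigr do rewrite mxE.
  exact: mean_ge (det_pinch_Gmat H).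
exact: mean_ge (det_pinch_blockH H).
Qed.
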